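(* Let $\ell\in\mathbb R^r$ be a generic length vector with positive, weakly increasing coordinates. If there is an $\ell$-long subset $J\subset[r]$ with $\#J=\mu(\ell)$, then $\ell$ is equivalent to the length vector $(0,\dots,0,1,\dots,1)$ whose last $2\mu(\ell)-1$ coordinates equal $1$ and whose first $r-2\mu(\ell)+1$ coordinates equal $0$.
   Context: $[r]=\{1,\dots,r\}$. A length vector $\ell\in\mathbb R^r$ is generic if $\sum_{j\in J}\ell_j\ne\sum_{j\notin J}\ell_j$ for every $J\subset[r]$; $J$ is $\ell$-long if $\sum_{j\in J}\ell_j>\sum_{j\notin J}\ell_j$ and $\ell$-short otherwise. Two generic length vectors are equivalent ($\sim$) if they have the same long (equivalently, short) subsets. $\sigma_\ell(J)=\#\{j\in J: J\setminus\{j\}\text{ is }\ell\text{-short}\}$ and $\mu(\ell)=\min\{\sigma_\ell(J): J\text{ }\ell\text{-long},\ \sigma_\ell(J)>0\}$. *)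

From HB Require Import structures.
From mathcomp Require Import all_boot all_order all_algebra.
Set Implicit Arguments. Unset Strict Implicit. Unset Printing Implicit Defensive.
Import Order.TTheory GRing.Theory Num.Theory.
Local Open Scope ring_scope.

Section LengthVectors.
Variables (R : realFieldType) (r : nat).

Definition lsum (l : 'I_r -> R) (J : {set 'I_r}) : R := \sum_(j in J) l j.

Definition generic (l : 'I_r -> R) : bool :=
  [forall J : {set 'I_r}, lsum l J != lsum l (~: J)].

Definition long (l : 'I_r -> R) (J : {set 'I_r}) : bool :=
  lsum l (~: J) < lsum l J.

Definition short (l : 'I_r -> R) (J : {set 'I_r}) : bool := ~~ long l J.

Definition lequiv (l l' : 'I_r -> R) : bool :=
  [&& generic l, generic l' & [forall J : {set 'I_r}, long l J == long l' J]].

Definition sigma (l : 'I_r -> R) (J : {set 'I_r}) : nat :=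
  #|[set j in J | short l (J :\ j)]|.

(* mu(l) = min { sigma_l(J) : J l-long, sigma_l(J) > 0 };
   the default value r (an upper bound for sigma) is only used if the
   index set is empty, which cannot happen for positive generic l. *)
Definition mu (l : 'I_r -> R) : nat :=
  \big[minn/r]_(J : {set 'I_r} | long l J && (0 < sigma l J)%N) sigma l J.

Definition lastones (k : nat) : 'I_r -> R :=
  fun i => if (r - k <= val i)%N then 1 else 0.

End LengthVectors.

(* Let m = mu(l), S the last 2m-1 indices and T the last m indices.  Every
   long set has at least m elements, since a minimal long set X has
   sigma(X) = #X; so the last m-1 indices form a short set and 2m-1 <= r.  By
   monotonicity T is at least as long as the given J of size m, hence long.
   The heart of the proof: every long X meets S in at least m elements.
   Otherwise X meets T in some s, and counting gives y in S \ X with y < s.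
   X + y is long, and an element j whose removal makes it short must lie in
   X and in S (if j is not in S then l_j <= l_y), so sigma(X + y) < m, which
   forces sigma(X + y) = 0.  Hence X + y - s is long, meets S in no more
   elements than X, and has a smaller index sum: induct on the index sum.
   Conversely, if X meets S in at least m elements its complement meets S in
   at most m-1, so it is short and X is long.  Being long for l is therefore
   the same as being long for the 0/1 vector with 2m-1 ones. *)

From mathcomp Require Import all_boot all_order all_algebra.
From mathcomp Require Import zify.
Set Implicit Arguments.
Unset Strict Implicit.
Unset Printing Implicit Defensive.
Import Order.TTheory GRing.Theory Num.Theory.
Local Open Scope ring_scope.

Lemma card_setU1D1I (T : finType) (X S : {set T}) y s : s \in X :&: S ->
  (#|((y |: X) :\ s) :&: S| <= #|X :&: S|)%N.
Proof.
move=> sXS; rewrite (cardsD1 s (X :&: S)) sXS.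
apply: leq_trans (subset_leq_card (_ : _ \subset y |: ((X :&: S) :\ s))) _.
  apply/subsetP => i; rewrite !inE.
  by case/andP=> /andP[-> /orP[->|->]] ->; rewrite ?orbT.
by rewrite cardsU1 leq_add2r leq_b1.
Qed.

Section LengthVectors.
Variables (R : realFieldType) (r : nat).
Implicit Types (l : 'I_r -> R) (A B X : {set 'I_r}).

Definition topset (n : nat) : {set 'I_r} := [set i : 'I_r | (r - n <= i)%N].

Lemma card_topset n : (n <= r)%N -> #|topset n| = n.
Proof.
move=> le_nr; rewrite -sum1_card.
transitivity (\sum_(r - n <= i < r) 1)%N; last by rewrite sum_nat_const_nat; lia.
by rewrite big_geq_mkord; apply: eq_bigl => i; rewrite inE.
Qed.

Lemma cardsI_topsetC k X :
  (k <= r)%N -> (#|X :&: topset k| + #|~: X :&: topset k|)%N = k.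
Proof.
move=> le_kr; rewrite -[RHS](card_topset le_kr) -(cardsID X (topset k)) setDE.
by rewrite (setIC _ X) (setIC _ (~: X)).
Qed.

Lemma topsetD_lt k m X s : (k <= r)%N -> s \in topset m -> s \in X ->
  (#|X :&: topset k| + m <= k)%N -> exists2 y, y \in topset k :\: X & (y < s)%N.
Proof.
move=> le_kr sT sX small.
have [/exists_inP //|/exists_inPn no_lt] :=
  boolP [exists y in topset k :\: X, (y < s)%N].
have sub : topset k :\: X \subset topset (r - s.+1).
  apply/subsetP => y yD; have := no_lt y yD; move: yD sT.
  rewrite !inE -leqNgt => /andP[yX _] sT le_sy.
  have : y != s by apply: contraNneq yX => ->.
  rewrite -val_eqE /=; have := ltn_ord s; lia.
have := subset_leq_card sub; rewrite card_topset ?leq_subr //.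
have := cardsID X (topset k); rewrite setIC card_topset //.
by move: sT; rewrite inE; have := ltn_ord s; lia.
Qed.

Lemma lsumC l A : lsum l (~: A) = \sum_i l i - lsum l A.
Proof.
rewrite /lsum (bigID (mem A) predT) /= addrC addrK.
by apply: eq_bigl => i; rewrite inE.
Qed.

Lemma longE l A : long l A = (\sum_i l i < lsum l A *+ 2).
Proof. by rewrite /long lsumC ltrBlDr -mulr2n. Qed.

Lemma long_lsum_le l A B : long l A -> lsum l A <= lsum l B -> long l B.
Proof. by rewrite !longE => /lt_le_trans lA le_AB; apply: lA; rewrite lerMn2r. Qed.

Lemma short_setC l A : generic l -> short l A -> long l (~: A).
Proof.
move=> /forallP/(_ A); rewrite /short /long setCK -leNgt le_eqVlt eq_sym.
by case: eqP.
Qed.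

Lemma lsum_swap_ge l X j y : j \in X -> y \notin X -> l j <= l y ->
  lsum l X <= lsum l ((y |: X) :\ j).
Proof.
move=> jX yX le_jy.
have jY : j \in y |: X by rewrite setU1r.
have eqD : lsum l (y |: X) = l j + lsum l ((y |: X) :\ j) by rewrite /lsum (big_setD1 j jY).
have eqU : lsum l (y |: X) = l y + lsum l X by rewrite /lsum big_setU1.
by rewrite -(lerD2l (l j)) -eqD eqU lerD2r.
Qed.

Lemma mu_le_r l : (mu l <= r)%N.
Proof. exact: (@bigmin_le_id _ nat). Qed.

Lemma lsum_lastones k X : lsum (@lastones R r k) X = #|X :&: topset k|%:R.
Proof.
rewrite /lsum /lastones -big_mkcondr /= -sumr_const.
by apply: eq_bigl => i; rewrite !inE.
Qed.

Lemma long_lastones k X : (k <= r)%N ->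
  long (@lastones R r k) X = (k < 2 * #|X :&: topset k|)%N.
Proof.
move=> le_kr; rewrite /long !lsum_lastones ltr_nat.
by have := cardsI_topsetC X le_kr; lia.
Qed.

Lemma generic_lastones k : odd k -> (k <= r)%N -> generic (@lastones R r k).
Proof.
move=> odd_k le_kr; apply/forallP => X; rewrite !lsum_lastones eqr_nat.
apply: contraTneq odd_k => eq_cards.
by have := cardsI_topsetC X le_kr; rewrite eq_cards addnn => <-; rewrite odd_double.
Qed.

Section NonnegativeLengths.
Variable l : 'I_r -> R.
Hypothesis l_ge0 : forall i, 0 <= l i.

Lemma lsum_subset A B : A \subset B -> lsum l A <= lsum l B.
Proof.
move=> sAB; rewrite /lsum [X in _ <= X](big_setID A) /= (setIidPr sAB) lerDl.
by apply: sumr_ge0 => i _.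
Qed.

Lemma long_subset A B : A \subset B -> long l A -> long l B.
Proof. by move=> sAB lA; apply: long_lsum_le lA (lsum_subset sAB). Qed.

Lemma long_card_gt0 A : long l A -> (0 < #|A|)%N.
Proof.
rewrite card_gt0; apply: contraTneq => ->.
by rewrite longE /lsum big_set0 mul0rn -leNgt sumr_ge0.
Qed.

Lemma long_meet A B : long l A -> long l B -> A :&: B != set0.
Proof.
move=> lA lB; apply/negP => /eqP dAB.
have sAB : A \subset ~: B by rewrite -disjoints_subset -setI_eq0 dAB.
have sBA : B \subset ~: A by rewrite -disjoints_subset -setI_eq0 setIC dAB.
move: lA lB; rewrite /long => /lt_le_trans/(_ (lsum_subset sAB)) lAB.
by move=> /lt_le_trans/(_ (lsum_subset sBA))/(lt_trans lAB); rewrite ltxx.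
Qed.

Lemma mu_le_sigma A : long l A -> (0 < sigma l A)%N -> (mu l <= sigma l A)%N.
Proof. by move=> lA sA; apply: (@bigmin_le_cond _ nat); rewrite lA sA. Qed.

Lemma sigma_eq_card A : {in A, forall x, short l (A :\ x)} -> sigma l A = #|A|.
Proof.
move=> shortA; rewrite /sigma (_ : [set x in A | _] = A) //.
apply/setP => x; rewrite inE.
by case: (boolP (x \in A)) => // /shortA ->.
Qed.

Lemma mu_le_card A : long l A -> (mu l <= #|A|)%N.
Proof.
have [n] := ubnP #|A|; elim: n A => // n IHn A cardA lA.
have [/exists_inP[x xA lAx]|/exists_inPn shortA] :=
  boolP [exists x in A, long l (A :\ x)].
  have ltAx : (#|A :\ x| < #|A|)%N by rewrite (cardsD1 x A) xA.
  exact: leq_trans (IHn _ (leq_trans ltAx _) lAx) (ltnW ltAx).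
have sigmaA := sigma_eq_card shortA.
by rewrite -sigmaA mu_le_sigma // sigmaA long_card_gt0.
Qed.

Lemma double_mu_le : generic l -> (2 * mu l - 1 <= r)%N.
Proof.
move=> l_gen; have le_mr := mu_le_r l.
have [->//|mu_gt0] := posnP (mu l).
have cardZ : #|topset (mu l - 1)| = (mu l - 1)%N by rewrite card_topset //; lia.
have shortZ : short l (topset (mu l - 1)).
  by apply/negP => /mu_le_card; rewrite cardZ; lia.
have := mu_le_card (short_setC l_gen shortZ).
by rewrite cardsCs setCK card_ord cardZ; lia.
Qed.

Section MonotoneLengths.
Hypothesis l_mono : forall i j : 'I_r, (i <= j)%N -> l i <= l j.

Lemma lsum_le_topset A : lsum l A <= lsum l (topset #|A|).
Proof.
set T := topset #|A|.
have [->|[a aA]] := set_0Vmem A; first by rewrite /lsum big_set0 sumr_ge0.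
have le_Ar : (#|A| <= r)%N by have := max_card A; rewrite card_ord.
have lt_r : (r - #|A| < r)%N.
  have : (0 < #|A|)%N by apply/card_gt0P; exists a.
  by have := ltn_ord a; lia.
pose c := Ordinal lt_r.
have cardD : #|A :\: T| = #|T :\: A|.
  have := cardsID T A; have := cardsID A T; rewrite setIC card_topset //; lia.
rewrite /lsum (big_setID T) [X in _ <= X](big_setID A) /= setIC lerD2l.
apply: (@le_trans _ _ (l c *+ #|A :\: T|)).
  rewrite -sumr_const; apply: ler_sum => i; rewrite !inE => /andP[iT _].
  by apply: l_mono; rewrite /= ltnW // ltnNge.
rewrite cardD -sumr_const; apply: ler_sum => i; rewrite !inE => /andP[_ iT].
exact: l_mono.
Qed.

Lemma long_topset A : long l A -> long l (topset #|A|).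
Proof. by move=> lA; apply: long_lsum_le lA (lsum_le_topset A). Qed.

Lemma sigma_setU1_le k X y : long l X -> y \in topset k -> y \notin X ->
  (sigma l (y |: X) <= #|X :&: topset k|)%N.
Proof.
move=> lX yT yX; apply: subset_leq_card; apply/subsetP => j.
rewrite !inE => /andP[jY short_j].
have jy : j != y by apply: contraNneq short_j => ->; rewrite /short setU1K ?lX.
move: jY; rewrite (negbTE jy) /= => jX; rewrite jX /=.
apply: contraNT short_j; rewrite -ltnNge /short => lt_j.
apply: long_lsum_le lX (lsum_swap_ge jX yX (l_mono _)).
by move: yT; rewrite inE; lia.
Qed.

Lemma mu_le_cardI_topset X : generic l -> long l (topset (mu l)) -> long l X ->
  (mu l <= #|X :&: topset (2 * mu l - 1)|)%N.
Proof.
move=> l_gen long_top lX0.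
set m := mu l in long_top *; set k := (2 * m - 1)%N.
have le_kr : (k <= r)%N := double_mu_le l_gen.
rewrite leqNgt; apply/negP => small0.
have sub_mk : topset m \subset topset k by apply/subsetP => i; rewrite !inE; lia.
have [n] := ubnP (\sum_(i in X) i)%N.
elim: n X lX0 small0 => // n IHn X lX small weight.
have /set0Pn[s /setIP[sX sT]] := long_meet lX long_top.
have [y /setDP[yT yX] lt_ys] := topsetD_lt le_kr sT sX (ltac:(lia)).
have sY : s \in y |: X by rewrite setU1r.
have long_Ys : long l ((y |: X) :\ s).
  have lY : long l (y |: X) := long_subset (subsetUr _ _) lX.
  apply/negPn/negP => short_Ys.
  have sigma_small := leq_ltn_trans (sigma_setU1_le lX yT yX) small.
  suff /(mu_le_sigma lY) : (0 < sigma l (y |: X))%N by rewrite leqNgt sigma_small.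
  by rewrite /sigma card_gt0; apply/set0Pn; exists s; rewrite inE sY.
apply: IHn long_Ys _ _.
  by rewrite (leq_ltn_trans (card_setU1D1I y _)) // inE sX (subsetP sub_mk).
have eqD : (\sum_(i in y |: X) i = s + \sum_(i in (y |: X) :\ s) i)%N.
  by rewrite (big_setD1 s sY).
have eqU : (\sum_(i in y |: X) i = y + \sum_(i in X) i)%N by rewrite big_setU1.
by rewrite -(ltn_add2l s) -eqD eqU -addSn leq_add.
Qed.

Lemma long_topsetE X : generic l -> long l (topset (mu l)) ->
  long l X = (mu l <= #|X :&: topset (2 * mu l - 1)|)%N.
Proof.
move=> l_gen long_top; apply/idP/idP; first exact: mu_le_cardI_topset.
move=> many; apply/negPn/negP => short_X.
have := mu_le_cardI_topset l_gen long_top (short_setC l_gen short_X).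
have := cardsI_topsetC X (double_mu_le l_gen).
have := long_card_gt0 long_top; rewrite card_topset ?mu_le_r //; lia.
Qed.

End MonotoneLengths.
End NonnegativeLengths.
End LengthVectors.

Theorem lemma4p1 (R : realFieldType) (r : nat) (l : 'I_r -> R)
  (hgen : generic l)
  (hpos : forall i : 'I_r, 0 < l i)
  (hmono : forall i j : 'I_r, (i <= j)%N -> l i <= l j)
  (hJ : exists J : {set 'I_r}, long l J && (#|J| == mu l)) :
  lequiv l (@lastones R r (2 * mu l - 1)%N).
Proof.
have l_ge0 i : 0 <= l i := ltW (hpos i).
have [J /andP[lJ /eqP cardJ]] := hJ.
have mu_gt0 : (0 < mu l)%N by rewrite -cardJ (long_card_gt0 l_ge0 lJ).
have long_top : long l (topset r (mu l)) by rewrite -cardJ long_topset.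
have le_kr := double_mu_le l_ge0 hgen.
have odd_k : odd (2 * mu l - 1).
  by case: (mu l) mu_gt0 => // m _; rewrite mul2n doubleS subn1 /= odd_double.
rewrite /lequiv hgen generic_lastones //=; apply/forallP => X.
rewrite long_lastones // (long_topsetE l_ge0 hmono X hgen long_top).
by apply/eqP; apply/idP/idP => ?; lia.
Qed.
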